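(* If a formula $A$ is valid in every neighbourhood model satisfying centering (that is, in all models of $\mathbb{PC}$), then the sequent $\Rightarrow x:A$ is derivable in $\mathsf{CL}^C$.
   Context: Formulas $\mathcal{L}::=p\mid\bot\mid A\wedge B\mid A\lor B\mid A\to B\mid A>B$. Neighbourhood model $\langle W,N,\llbracket\cdot\rrbracket\rangle$: $W\ne\emptyset$, $N:W\to\mathcal{P}(\mathcal{P}(W))$ with all $\alpha\in N(x)$ non-empty; $x\Vdash A>B$ iff every $\alpha\in N(x)$ containing an $A$-world has some $\beta\in N(x)$, $\beta\subseteq\alpha$, containing an $A$-world, with all worlds of $\beta$ forcing $A\to B$. Centering: for all $x\in W$, $x\in\alpha$ for every $\alpha\in N(x)$, and $\{x\}\in N(x)$. $\mathsf{CL}^C$: world labels, neighbourhood labels including $\{x\}$ for each world label $x$; relational atoms $a\in N(x)$, $x\in a$, $a\subseteq b$; labelled formulas: these, $x:A$, $a\Vdash^\exists A$, $a\Vdash^\forall A$, $x\Vdash_aA|B$. Rules (premisses / conclusion; ''fresh'': not in conclusion): initial $x:p,\Gamma\Rightarrow\Delta,x:p$ ($p$ atomic), $x:\bot,\Gamma\Rightarrow\Delta$; G3 propositional rules; L$\forall$: $x:A,x\in a,a\Vdash^\forall A,\Gamma\Rightarrow\Delta$ / $x\in a,a\Vdash^\forall A,\Gamma\Rightarrow\Delta$; R$\forall$ (x fresh): $x\in a,\Gamma\Rightarrow\Delta,x:A$ / $\Gamma\Rightarrow\Delta,a\Vdash^\forall A$; L$\exists$ (x fresh): $x\in a,x:A,\Gamma\Rightarrow\Delta$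 / $a\Vdash^\exists A,\Gamma\Rightarrow\Delta$; R$\exists$: $x\in a,\Gamma\Rightarrow\Delta,x:A,a\Vdash^\exists A$ / $x\in a,\Gamma\Rightarrow\Delta,a\Vdash^\exists A$; R$>$ (a fresh): $a\in N(x),a\Vdash^\exists A,\Gamma\Rightarrow\Delta,x\Vdash_aA|B$ / $\Gamma\Rightarrow\Delta,x:A>B$; L$>$: $a\in N(x),x:A>B,\Gamma\Rightarrow\Delta,a\Vdash^\exists A$ and $x\Vdash_aA|B,a\in N(x),x:A>B,\Gamma\Rightarrow\Delta$ / $a\in N(x),x:A>B,\Gamma\Rightarrow\Delta$; R$|$: $c\in N(x),c\subseteq a,\Gamma\Rightarrow\Delta,x\Vdash_aA|B,c\Vdash^\exists A$ and $c\in N(x),c\subseteq a,\Gamma\Rightarrow\Delta,x\Vdash_aA|B,c\Vdash^\forall A\to B$ / $c\in N(x),c\subseteq a,\Gamma\Rightarrow\Delta,x\Vdash_aA|B$; L$|$ (c fresh): $c\in N(x),c\subseteq a,c\Vdash^\exists A,c\Vdash^\forall A\to B,\Gamma\Rightarrow\Delta$ / $x\Vdash_aA|B,\Gamma\Rightarrow\Delta$; Ref: $a\subseteq a,\Gamma\Rightarrow\Delta$ / $\Gamma\Rightarrow\Delta$; Tr: $c\subseteq a,c\subseteq b,b\subseteq a,\Gamma\Rightarrow\Delta$ / $c\subseteq b,b\subseteq a,\Gamma\Rightarrow\Delta$; L$\subseteq$: $x\in a,a\subseteq b,x\in b,\Gamma\Rightarrow\Delta$ / $x\in a,a\subseteq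 b,\Gamma\Rightarrow\Delta$; N (a fresh): $a\in N(x),\Gamma\Rightarrow\Delta$ / $\Gamma\Rightarrow\Delta$; 0 (y fresh): $y\in a,a\in N(x),\Gamma\Rightarrow\Delta$ / $a\in N(x),\Gamma\Rightarrow\Delta$; T (a fresh): $x\in a,a\in N(x),\Gamma\Rightarrow\Delta$ / $\Gamma\Rightarrow\Delta$; W: $x\in a,a\in N(x),\Gamma\Rightarrow\Delta$ / $a\in N(x),\Gamma\Rightarrow\Delta$; Single: $x\in\{x\},\{x\}\in N(x),\Gamma\Rightarrow\Delta$ / $\{x\}\in N(x),\Gamma\Rightarrow\Delta$; C: $\{x\}\in N(x),\{x\}\subseteq a,a\in N(x),\Gamma\Rightarrow\Delta$ / $a\in N(x),\Gamma\Rightarrow\Delta$; Repl$_1$: $y\in\{x\},At(x),At(y),\Gamma\Rightarrow\Delta$ / $y\in\{x\},At(x),\Gamma\Rightarrow\Delta$; Repl$_2$: $y\in\{x\},At(x),At(y),\Gamma\Rightarrow\Delta$ / $y\in\{x\},At(y),\Gamma\Rightarrow\Delta$, where $At(x)$ is one of $x:P$ ($P$ atomic), $x\in a$, $a\in N(x)$, $x\in\{z\}$ and $At(y)$ replaces $x$ by $y$. *)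

From Stdlib Require Import List Permutation.
Import ListNotations.

Inductive form : Type :=
| Atom : nat -> form
| Bot : form
| And : form -> form -> form
| Or : form -> form -> form
| Imp : form -> form -> form
| Cond : form -> form -> form.

Section Semantics.
Variables (W : Type) (N : W -> (W -> Prop) -> Prop) (V : nat -> W -> Prop).

Fixpoint forces (x : W) (A : form) : Prop :=
  match A with
  | Atom p => V p x
  | Bot => False
  | And A B => forces x A /\ forces x B
  | Or A B => forces x A \/ forces x B
  | Imp A B => forces x A -> forces x B
  | Cond A B =>
      forall alpha, N x alpha -> (exists y, alpha y /\ forces y A) ->
      exists beta, N x beta /\ (forall z, beta z -> alpha z) /\
        (exists y, beta y /\ forces y A) /\
        (forall z, beta z -> forces z A -> forces z B)
  end.

Definition nbhd_nonempty : Prop := forall x alpha, N x alpha -> exists y, alpha y.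

Definition centering : Prop :=
  (forall x alpha, N x alpha -> alpha x) /\ (forall x, N x (fun y => y = x)).
End Semantics.

Definition valid_PC (A : form) : Prop :=
  forall (W : Type) (N : W -> (W -> Prop) -> Prop) (V : nat -> W -> Prop),
    inhabited W -> nbhd_nonempty W N -> centering W N ->
    forall x : W, forces W N V x A.

(** neighbourhood labels: variables, or the singleton {x} of a world label x *)
Inductive nlabel : Type :=
| NVar : nat -> nlabel
| NSing : nat -> nlabel.

Inductive lform : Type :=
| LN : nlabel -> nat -> lform                   (* a ∈ N(x) *)
| LIn : nat -> nlabel -> lform                  (* x ∈ a *)
| LSub : nlabel -> nlabel -> lform              (* a ⊆ b *)
| LF : nat -> form -> lform                     (* x : A *)
| LEx : nlabel -> form -> lform                 (* a ⊩∃ A *)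
| LAll : nlabel -> form -> lform                (* a ⊩∀ A *)
| LCnd : nat -> nlabel -> form -> form -> lform. (* x ⊩_a A|B *)

Definition wocc_n (y : nat) (a : nlabel) : Prop := a = NSing y.

Definition wocc (y : nat) (f : lform) : Prop :=
  match f with
  | LN a x => wocc_n y a \/ x = y
  | LIn x a => x = y \/ wocc_n y a
  | LSub a b => wocc_n y a \/ wocc_n y b
  | LF x _ => x = y
  | LEx a _ => wocc_n y a
  | LAll a _ => wocc_n y a
  | LCnd x a _ _ => x = y \/ wocc_n y a
  end.

Definition nocc (n : nat) (f : lform) : Prop :=
  match f with
  | LN a _ => a = NVar n
  | LIn _ a => a = NVar n
  | LSub a b => a = NVar n \/ b = NVar n
  | LF _ _ => False
  | LEx a _ => a = NVar n
  | LAll a _ => a = NVar n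
  | LCnd _ a _ _ => a = NVar n
  end.

Definition wfresh (y : nat) (G D : list lform) : Prop :=
  forall f, In f (G ++ D) -> ~ wocc y f.
Definition nfresh (n : nat) (G D : list lform) : Prop :=
  forall f, In f (G ++ D) -> ~ nocc n f.

(** atomic formulas for the replacement rules: [At x y f g] means that
    f = At(x) and g = At(y) (x replaced by y in the distinguished position),
    At being one of  x:P (P atomic), x ∈ a, a ∈ N(x)  (x ∈ {z} is the case a = {z}). *)
Inductive At (x y : nat) : lform -> lform -> Prop :=
| At_atom p : At x y (LF x (Atom p)) (LF y (Atom p))
| At_in a : At x y (LIn x a) (LIn y a)
| At_N a : At x y (LN a x) (LN a y).

(** Sequents Γ ⇒ Δ with multiset contexts (lists up to permutation). *)
Inductive deriv : list lform -> list lform -> Prop :=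
| d_perm G G' D D' : Permutation G G' -> Permutation D D' ->
    deriv G D -> deriv G' D'
| d_init x p G D : deriv (LF x (Atom p) :: G) (LF x (Atom p) :: D)
| d_bot x G D : deriv (LF x Bot :: G) D
| d_Land x A B G D : deriv (LF x A :: LF x B :: G) D ->
    deriv (LF x (And A B) :: G) D
| d_Rand x A B G D : deriv G (LF x A :: D) -> deriv G (LF x B :: D) ->
    deriv G (LF x (And A B) :: D)
| d_Lor x A B G D : deriv (LF x A :: G) D -> deriv (LF x B :: G) D ->
    deriv (LF x (Or A B) :: G) D
| d_Ror x A B G D : deriv G (LF x A :: LF x B :: D) ->
    deriv G (LF x (Or A B) :: D)
| d_Limp x A B G D : deriv G (LF x A :: D) -> deriv (LF x B :: G) D ->
    deriv (LF x (Imp A B) :: G) D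
| d_Rimp x A B G D : deriv (LF x A :: G) (LF x B :: D) ->
    deriv G (LF x (Imp A B) :: D)
| d_Lall x a A G D :
    deriv (LF x A :: LIn x a :: LAll a A :: G) D ->
    deriv (LIn x a :: LAll a A :: G) D
| d_Rall x a A G D : wfresh x G (LAll a A :: D) ->
    deriv (LIn x a :: G) (LF x A :: D) ->
    deriv G (LAll a A :: D)
| d_Lex x a A G D : wfresh x (LEx a A :: G) D ->
    deriv (LIn x a :: LF x A :: G) D ->
    deriv (LEx a A :: G) D
| d_Rex x a A G D :
    deriv (LIn x a :: G) (LF x A :: LEx a A :: D) ->
    deriv (LIn x a :: G) (LEx a A :: D)
| d_Rcond x a A B G D : nfresh a G (LF x (Cond A B) :: D) ->
    deriv (LN (NVar a) x :: LEx (NVar a) A :: G) (LCnd x (NVar a) A B :: D) ->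
    deriv G (LF x (Cond A B) :: D)
| d_Lcond x a A B G D :
    deriv (LN a x :: LF x (Cond A B) :: G) (LEx a A :: D) ->
    deriv (LCnd x a A B :: LN a x :: LF x (Cond A B) :: G) D ->
    deriv (LN a x :: LF x (Cond A B) :: G) D
| d_Rbar x a c A B G D :
    deriv (LN c x :: LSub c a :: G) (LCnd x a A B :: LEx c A :: D) ->
    deriv (LN c x :: LSub c a :: G) (LCnd x a A B :: LAll c (Imp A B) :: D) ->
    deriv (LN c x :: LSub c a :: G) (LCnd x a A B :: D)
| d_Lbar x a c A B G D : nfresh c (LCnd x a A B :: G) D ->
    deriv (LN (NVar c) x :: LSub (NVar c) a :: LEx (NVar c) A
             :: LAll (NVar c) (Imp A B) :: G) D ->
    deriv (LCnd x a A B :: G) D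
| d_Ref a G D : deriv (LSub a a :: G) D -> deriv G D
| d_Tr a b c G D : deriv (LSub c a :: LSub c b :: LSub b a :: G) D ->
    deriv (LSub c b :: LSub b a :: G) D
| d_Lsub x a b G D : deriv (LIn x a :: LSub a b :: LIn x b :: G) D ->
    deriv (LIn x a :: LSub a b :: G) D
| d_N x a G D : nfresh a G D -> deriv (LN (NVar a) x :: G) D -> deriv G D
| d_0 x y a G D : wfresh y (LN a x :: G) D ->
    deriv (LIn y a :: LN a x :: G) D -> deriv (LN a x :: G) D
| d_T x a G D : nfresh a G D ->
    deriv (LIn x (NVar a) :: LN (NVar a) x :: G) D -> deriv G D
| d_W x a G D : deriv (LIn x a :: LN a x :: G) D -> deriv (LN a x :: G) D
| d_Single x G D : deriv (LIn x (NSing x) :: LN (NSing x) x :: G) D ->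
    deriv (LN (NSing x) x :: G) D
| d_C x a G D :
    deriv (LN (NSing x) x :: LSub (NSing x) a :: LN a x :: G) D ->
    deriv (LN a x :: G) D
| d_Repl1 x y f g G D : At x y f g ->
    deriv (LIn y (NSing x) :: f :: g :: G) D ->
    deriv (LIn y (NSing x) :: f :: G) D
| d_Repl2 x y f g G D : At x y f g ->
    deriv (LIn y (NSing x) :: f :: g :: G) D ->
    deriv (LIn y (NSing x) :: g :: G) D.

From Stdlib Require Import List Permutation Morphisms Arith Lia Relations Cantor.
From Stdlib Require Import Classical ClassicalEpsilon FunctionalExtensionality PropExtensionality.
Import ListNotations.

(* Completeness by a failed proof search.  If [⇒ x:A] is not derivable, the rules of CL^C
   are applied backwards along a fair enumeration of all rule instances, always keeping an
   underivable premise.  The antecedents and succedents met along this branch, Γ* and Δ*,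
   are saturated under every rule and contain no initial sequent.  They define a centred
   neighbourhood model whose worlds are the world labels modulo [y ∈ {x}] ∈ Γ*, the
   neighbourhoods of [x] being the denotations of the [a] with [a ∈ N(x)] ∈ Γ*, together
   with [{x}].  Each world also has copies tagged by neighbourhood labels: the copy tagged
   [c] lies in the denotation of [a] iff [c ⊆ a] ∈ Γ*, so that inclusion of denotations
   reflects [⊆], as the rule R| needs.  By the truth lemma every formula of Γ* is forced and
   no formula of Δ* is, so [A] fails at [x]. *)

Definition sequent := (list lform * list lform)%type.
Definition derivable (s : sequent) : Prop := deriv (fst s) (snd s).

#[local] Instance deriv_Permutation :
  Proper (@Permutation lform ==> @Permutation lform ==> iff) deriv.
Proof.
  intros G G' HG D D' HD; split; apply d_perm; auto using Permutation_sym.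
Qed.

Definition lform_eq_dec (f g : lform) : {f = g} + {f <> g}.
Proof. repeat decide equality. Defined.

Fixpoint remove_one (f : lform) (l : list lform) : list lform :=
  match l with
  | [] => []
  | g :: l => if lform_eq_dec f g then l else g :: remove_one f l
  end.

Lemma remove_one_perm f l : In f l -> Permutation l (f :: remove_one f l).
Proof.
  induction l as [|g l IH]; simpl; [tauto|].
  destruct (lform_eq_dec f g) as [->|Hne]; [reflexivity|].
  intros [->|H]; [congruence|].
  etransitivity; [apply perm_skip, IH, H | apply perm_swap].
Qed.

Lemma remove_one_incl f l : incl (remove_one f l) l.
Proof.
  induction l as [|g l IH]; simpl; [easy|].
  destruct (lform_eq_dec f g); [apply incl_tl, incl_refl|].
  apply incl_cons; [now left | now apply incl_tl].
Qed.

Lemma in_remove_one f g l : In g l -> g <> f -> In g (remove_one f l).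
Proof.
  induction l as [|h l IH]; simpl; [tauto|].
  destruct (lform_eq_dec f h) as [->|Hfh]; simpl; intros [->|H] Hne; auto; congruence.
Qed.

Lemma In_Permutation_cons (f : lform) l : In f l -> exists l', Permutation l (f :: l').
Proof. exists (remove_one f l). now apply remove_one_perm. Qed.

Lemma In2_Permutation_cons (f g : lform) l : In f l -> In g l -> f <> g ->
  exists l', Permutation l (f :: g :: l').
Proof.
  intros Hf Hg Hne. exists (remove_one g (remove_one f l)).
  etransitivity; [apply (remove_one_perm f l Hf) |].
  apply perm_skip, remove_one_perm, in_remove_one; auto.
Qed.

Lemma perm_rotate3 {A} (x y z : A) l : Permutation (x :: y :: z :: l) (y :: z :: x :: l).
Proof. exact (Permutation_middle [y; z] l x). Qed.

Section Fresh.
Variables (occurs : nat -> lform -> Prop) (labels : lform -> list nat).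
Hypothesis labels_occurs : forall n f, occurs n f -> In n (labels f).

Definition fresh (G D : list lform) : nat := S (list_max (flat_map labels (G ++ D))).

Lemma fresh_spec G D G' D' : incl G' G -> incl D' D ->
  forall f, In f (G' ++ D') -> ~ occurs (fresh G D) f.
Proof.
  intros HG HD f Hf Hocc.
  assert (Hin : In (fresh G D) (flat_map labels (G ++ D))).
  { apply in_flat_map. exists f. split; auto.
    apply in_app_or in Hf as [Hf|Hf]; apply in_or_app; auto. }
  assert (Hle := proj1 (list_max_le (flat_map labels (G ++ D)) _) (le_n _)).
  rewrite Forall_forall in Hle. specialize (Hle _ Hin). unfold fresh in Hle. lia.
Qed.
End Fresh.

Definition nlabel_worlds (a : nlabel) : list nat :=
  match a with NVar _ => [] | NSing y => [y] end.
Definition lform_worlds (f : lform) : list nat :=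
  match f with
  | LN a x | LIn x a | LCnd x a _ _ => x :: nlabel_worlds a
  | LSub a b => nlabel_worlds a ++ nlabel_worlds b
  | LF x _ => [x]
  | LEx a _ | LAll a _ => nlabel_worlds a
  end.
Definition nlabel_vars (a : nlabel) : list nat :=
  match a with NVar n => [n] | NSing _ => [] end.
Definition lform_vars (f : lform) : list nat :=
  match f with
  | LN a _ | LIn _ a | LEx a _ | LAll a _ | LCnd _ a _ _ => nlabel_vars a
  | LSub a b => nlabel_vars a ++ nlabel_vars b
  | LF _ _ => []
  end.

Definition fresh_world := fresh lform_worlds.
Definition fresh_var := fresh lform_vars.

Lemma fresh_world_spec G D G' D' : incl G' G -> incl D' D -> wfresh (fresh_world G D) G' D'.
Proof.
  refine (fresh_spec wocc lform_worlds _ G D G' D').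
  intros n [] H; unfold wocc, wocc_n in H; simpl; intuition subst; simpl; auto with datatypes.
Qed.

Lemma fresh_var_spec G D G' D' : incl G' G -> incl D' D -> nfresh (fresh_var G D) G' D'.
Proof.
  refine (fresh_spec nocc lform_vars _ G D G' D').
  intros n [] H; simpl in H; intuition subst; simpl; auto with datatypes.
Qed.

Definition extension := (list lform * list lform)%type.
Definition extend (e : extension) (G D : list lform) : sequent := (fst e ++ G, snd e ++ D).

Definition left_extensions (f : lform) (G D : list lform) : list extension :=
  match f with
  | LF x (And A B) => [([LF x A; LF x B], [])]
  | LF x (Or A B) => [([LF x A], []); ([LF x B], [])]
  | LF x (Imp A B) => [([], [LF x A]); ([LF x B], [])]
  | LEx a A => let y := fresh_world G D in [([LIn y a; LF y A], [])]
  | LCnd x a A B =>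
      let c := NVar (fresh_var G D) in [([LN c x; LSub c a; LEx c A; LAll c (Imp A B)], [])]
  | _ => []
  end.

Definition right_extensions (f : lform) (G D : list lform) : list extension :=
  match f with
  | LF x (And A B) => [([], [LF x A]); ([], [LF x B])]
  | LF x (Or A B) => [([], [LF x A; LF x B])]
  | LF x (Imp A B) => [([LF x A], [LF x B])]
  | LF x (Cond A B) => let c := NVar (fresh_var G D) in [([LN c x; LEx c A], [LCnd x c A B])]
  | LAll a A => let y := fresh_world G D in [([LIn y a], [LF y A])]
  | _ => []
  end.

(* Rules whose principal formulas reappear in their premises: applied backwards, they only
   add formulas to the sequent. *)
Inductive expansion : Type :=
| ExLall (y : nat) (a : nlabel) (A : form)
| ExRex (y : nat) (a : nlabel) (A : form)
| ExLcond (x : nat) (a : nlabel) (A B : form)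
| ExRbar (x : nat) (c a : nlabel) (A B : form)
| ExRef (a : nlabel)
| ExTr (a b c : nlabel)
| ExLsub (y : nat) (a b : nlabel)
| ExT (x : nat)
| ExW (x : nat) (a : nlabel)
| ExC (x : nat) (a : nlabel)
| ExRepl1Atom (y x p : nat)
| ExRepl2Atom (y x p : nat)
| ExRepl1N (y x : nat) (a : nlabel)
| ExRepl2N (y x : nat) (a : nlabel).

Definition requires (r : expansion) : list lform * list lform :=
  match r with
  | ExLall y a A => ([LIn y a; LAll a A], [])
  | ExRex y a A => ([LIn y a], [LEx a A])
  | ExLcond x a A B => ([LN a x; LF x (Cond A B)], [])
  | ExRbar x c a A B => ([LN c x; LSub c a], [LCnd x a A B])
  | ExRef _ | ExT _ => ([], [])
  | ExTr a b c => ([LSub c b; LSub b a], [])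
  | ExLsub y a b => ([LIn y a; LSub a b], [])
  | ExW x a | ExC x a => ([LN a x], [])
  | ExRepl1Atom y x p => ([LIn y (NSing x); LF x (Atom p)], [])
  | ExRepl2Atom y x p => ([LIn y (NSing x); LF y (Atom p)], [])
  | ExRepl1N y x a => ([LIn y (NSing x); LN a x], [])
  | ExRepl2N y x a => ([LIn y (NSing x); LN a y], [])
  end.

Definition expansions (r : expansion) (G D : list lform) : list extension :=
  match r with
  | ExLall y a A => [([LF y A], [])]
  | ExRex y a A => [([], [LF y A])]
  | ExLcond x a A B => [([], [LEx a A]); ([LCnd x a A B], [])]
  | ExRbar x c a A B => [([], [LEx c A]); ([], [LAll c (Imp A B)])]
  | ExRef a => [([LSub a a], [])]
  | ExTr a b c => [([LSub c a], [])]
  | ExLsub y a b => [([LIn y b], [])]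
  | ExT x => let c := NVar (fresh_var G D) in [([LIn x c; LN c x], [])]
  | ExW x a => [([LIn x a], [])]
  | ExC x a => [([LN (NSing x) x; LSub (NSing x) a], [])]
  | ExRepl1Atom y x p => [([LF y (Atom p)], [])]
  | ExRepl2Atom y x p => [([LF x (Atom p)], [])]
  | ExRepl1N y x a => [([LN a y], [])]
  | ExRepl2N y x a => [([LN a x], [])]
  end.

Inductive task : Type :=
| DecomposeL (f : lform)
| DecomposeR (f : lform)
| Expand (r : expansion).

Definition premises (t : task) (s : sequent) : list sequent :=
  let (G, D) := s in
  match t with
  | DecomposeL f =>
      if in_dec lform_eq_dec f G
      then map (fun e => extend e (remove_one f G) D) (left_extensions f G D) else []
  | DecomposeR f =>
      if in_dec lform_eq_dec f D
      then map (fun e => extend e G (remove_one f D)) (right_extensions f G D) else []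
  | Expand r =>
      if excluded_middle_informative (incl (fst (requires r)) G /\ incl (snd (requires r)) D)
      then map (fun e => extend e G D) (expansions r G D) else []
  end.

Ltac premises_as_hyps H :=
  simpl in H; repeat apply Forall_cons_iff in H as [?Hprem H]; clear H;
  unfold derivable in *; simpl in *.

Lemma decomposeL_sound f G D : In f G -> left_extensions f G D <> [] ->
  Forall derivable (map (fun e => extend e (remove_one f G) D) (left_extensions f G D)) ->
  deriv G D.
Proof.
  intros Hf Hne Hps.
  assert (Hfresh : incl (f :: remove_one f G) G) by (apply incl_cons; auto using remove_one_incl).
  rewrite (remove_one_perm f G Hf).
  destruct f as [| | |x [| | | | |]| | |]; simpl in Hne; try congruence; premises_as_hyps Hps.
  - now apply d_Land.
  - now apply d_Lor.
  - now apply d_Limp.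
  - apply (d_Lex (fresh_world G D)); auto using fresh_world_spec, incl_refl.
  - apply (d_Lbar _ _ (fresh_var G D)); auto using fresh_var_spec, incl_refl.
Qed.

Lemma decomposeR_sound f G D : In f D -> right_extensions f G D <> [] ->
  Forall derivable (map (fun e => extend e G (remove_one f D)) (right_extensions f G D)) ->
  deriv G D.
Proof.
  intros Hf Hne Hps.
  assert (Hfresh : incl (f :: remove_one f D) D) by (apply incl_cons; auto using remove_one_incl).
  rewrite (remove_one_perm f D Hf).
  destruct f as [| | |x [| | | | |]| | |]; simpl in Hne; try congruence; premises_as_hyps Hps.
  - now apply d_Rand.
  - now apply d_Ror.
  - now apply d_Rimp.
  - apply (d_Rcond _ (fresh_var G D)); auto using fresh_var_spec, incl_refl.
  - apply (d_Rall (fresh_world G D)); auto using fresh_world_spec, incl_refl.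
Qed.

Ltac pick1 H := let l := fresh "l" in let Hl := fresh "Hperm" in
  destruct (In_Permutation_cons _ _ H) as [l Hl]; rewrite Hl in *.
Ltac pick2 H1 H2 := let l := fresh "l" in let Hl := fresh "Hperm" in
  destruct (In2_Permutation_cons _ _ _ H1 H2 ltac:(discriminate)) as [l Hl]; rewrite Hl in *.

Lemma expansion_sound r G D : incl (fst (requires r)) G -> incl (snd (requires r)) D ->
  Forall derivable (map (fun e => extend e G D) (expansions r G D)) -> deriv G D.
Proof.
  intros HG HD Hps.
  destruct r; simpl in HG, HD;
    repeat apply incl_cons_inv in HG as [?Hreq HG];
    repeat apply incl_cons_inv in HD as [?Hreq HD]; clear HG HD; premises_as_hyps Hps.
  - pick2 Hreq Hreq0. now apply d_Lall.
  - pick1 Hreq. pick1 Hreq0. now apply d_Rex.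
  - pick2 Hreq Hreq0. now apply d_Lcond.
  - pick2 Hreq Hreq0. pick1 Hreq1.
    apply d_Rbar; [rewrite (perm_swap (LEx c A)) | rewrite (perm_swap (LAll c _))]; assumption.
  - now apply (d_Ref a).
  - destruct (lform_eq_dec (LSub c b) (LSub b a)) as [E|Hne].
    + (* Tr needs two occurrences; when [c = b = a] the premise is that of Ref. *)
      injection E as -> ->. now apply (d_Ref a).
    + destruct (In2_Permutation_cons _ _ _ Hreq Hreq0 Hne) as [l Hl]. rewrite Hl in *.
      now apply d_Tr.
  - pick2 Hreq Hreq0. apply d_Lsub. now rewrite <- perm_rotate3.
  - apply (d_T x (fresh_var G D)); auto using fresh_var_spec, incl_refl.
  - pick1 Hreq. now apply d_W.
  - pick1 Hreq. now apply d_C.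
  - pick2 Hreq Hreq0. apply (d_Repl1 x y _ (LF y (Atom p))); [constructor|].
    now rewrite <- perm_rotate3.
  - pick2 Hreq Hreq0. apply (d_Repl2 x y (LF x (Atom p))); [constructor|].
    now rewrite perm_swap.
  - pick2 Hreq Hreq0. apply (d_Repl1 x y _ (LN a y)); [constructor|].
    now rewrite <- perm_rotate3.
  - pick2 Hreq Hreq0. apply (d_Repl2 x y (LN a x)); [constructor|].
    now rewrite perm_swap.
Qed.

Lemma premises_sound t s : premises t s <> [] -> Forall derivable (premises t s) -> derivable s.
Proof.
  destruct s as [G D]; unfold derivable; simpl.
  destruct t as [f|f|r]; simpl.
  - destruct (in_dec lform_eq_dec f G); [|congruence].
    intros Hne. apply decomposeL_sound; auto. intros E; apply Hne; now rewrite E.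
  - destruct (in_dec lform_eq_dec f D); [|congruence].
    intros Hne. apply decomposeR_sound; auto. intros E; apply Hne; now rewrite E.
  - destruct excluded_middle_informative as [[HG HD]|]; [|congruence].
    intros _. now apply expansion_sound.
Qed.

Fixpoint list_code (l : list nat) : nat :=
  match l with
  | [] => 0
  | n :: l => S (Cantor.to_nat (n, list_code l))
  end.

Lemma list_code_inj l l' : list_code l = list_code l' -> l = l'.
Proof.
  revert l'; induction l as [|n l IH]; intros [|n' l'] H; cbn [list_code] in H;
    try discriminate; auto.
  apply Nat.succ_inj, (f_equal Cantor.of_nat) in H. rewrite !Cantor.cancel_of_to in H.
  injection H as -> H. f_equal. auto.
Qed.

Arguments list_code : simpl never.

Fixpoint form_code (A : form) : nat :=
  match A with
  | Atom p => list_code [0; p]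
  | Bot => list_code [1]
  | And A B => list_code [2; form_code A; form_code B]
  | Or A B => list_code [3; form_code A; form_code B]
  | Imp A B => list_code [4; form_code A; form_code B]
  | Cond A B => list_code [5; form_code A; form_code B]
  end.

Definition nlabel_code (a : nlabel) : nat :=
  match a with
  | NVar n => list_code [0; n]
  | NSing y => list_code [1; y]
  end.

Definition lform_code (f : lform) : nat :=
  match f with
  | LN a x => list_code [0; nlabel_code a; x]
  | LIn x a => list_code [1; x; nlabel_code a]
  | LSub a b => list_code [2; nlabel_code a; nlabel_code b]
  | LF x A => list_code [3; x; form_code A]
  | LEx a A => list_code [4; nlabel_code a; form_code A]
  | LAll a A => list_code [5; nlabel_code a; form_code A]
  | LCnd x a A B => list_code [6; x; nlabel_code a; form_code A; form_code B]
  end.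

Ltac code_inj :=
  let H := fresh in
  intro H; apply list_code_inj in H; inversion H; subst; f_equal; auto.

Lemma form_code_inj A B : form_code A = form_code B -> A = B.
Proof. revert B; induction A; intros []; simpl; code_inj. Qed.

Lemma nlabel_code_inj a b : nlabel_code a = nlabel_code b -> a = b.
Proof. destruct a, b; simpl; code_inj. Qed.

Lemma lform_code_inj f g : lform_code f = lform_code g -> f = g.
Proof.
  destruct f, g; simpl; code_inj;
    auto using nlabel_code_inj, form_code_inj.
Qed.

Definition expansion_code (r : expansion) : nat :=
  match r with
  | ExLall y a A => list_code [0; y; nlabel_code a; form_code A]
  | ExRex y a A => list_code [1; y; nlabel_code a; form_code A]
  | ExLcond x a A B => list_code [2; x; nlabel_code a; form_code A; form_code B]
  | ExRbar x c a A B =>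
      list_code [3; x; nlabel_code c; nlabel_code a; form_code A; form_code B]
  | ExRef a => list_code [4; nlabel_code a]
  | ExTr a b c => list_code [5; nlabel_code a; nlabel_code b; nlabel_code c]
  | ExLsub y a b => list_code [6; y; nlabel_code a; nlabel_code b]
  | ExT x => list_code [7; x]
  | ExW x a => list_code [8; x; nlabel_code a]
  | ExC x a => list_code [9; x; nlabel_code a]
  | ExRepl1Atom y x p => list_code [10; y; x; p]
  | ExRepl2Atom y x p => list_code [11; y; x; p]
  | ExRepl1N y x a => list_code [12; y; x; nlabel_code a]
  | ExRepl2N y x a => list_code [13; y; x; nlabel_code a]
  end.

Definition task_code (t : task) : nat :=
  match t with
  | DecomposeL f => list_code [0; lform_code f]
  | DecomposeR f => list_code [1; lform_code f]
  | Expand r => list_code [2; expansion_code r]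
  end.

Lemma expansion_code_inj r r' : expansion_code r = expansion_code r' -> r = r'.
Proof. destruct r, r'; simpl; code_inj; auto using nlabel_code_inj, form_code_inj. Qed.

Lemma task_code_inj t t' : task_code t = task_code t' -> t = t'.
Proof. destruct t, t'; simpl; code_inj; auto using lform_code_inj, expansion_code_inj. Qed.

Definition task_of_code (n : nat) : task :=
  epsilon (inhabits (Expand (ExT 0))) (fun t => task_code t = n).

Definition schedule (n : nat) : task := task_of_code (fst (Cantor.of_nat n)).

Lemma schedule_fair t m : exists n, m <= n /\ schedule n = t.
Proof.
  exists (Cantor.to_nat (task_code t, m)). split.
  - pose proof (Cantor.to_nat_non_decreasing (task_code t) m). lia.
  - unfold schedule, task_of_code. rewrite Cantor.cancel_of_to. simpl.
    apply task_code_inj, (epsilon_spec _ (fun t' => task_code t' = task_code t)). eauto.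
Qed.

Definition swap {T : Type} (p q v : T) : T :=
  if excluded_middle_informative (v = p) then q
  else if excluded_middle_informative (v = q) then p else v.

Lemma swap_involutive {T} (p q v : T) : swap p q (swap p q v) = v.
Proof. unfold swap. repeat (destruct excluded_middle_informative; subst); congruence. Qed.

Lemma swap_l {T} (p q : T) : swap p q p = q.
Proof. unfold swap. repeat (destruct excluded_middle_informative; subst); congruence. Qed.

Lemma swap_r {T} (p q : T) : swap p q q = p.
Proof. unfold swap. repeat (destruct excluded_middle_informative; subst); congruence. Qed.

Lemma swap_same {T} (p v : T) : swap p p v = v.
Proof. unfold swap. repeat (destruct excluded_middle_informative; subst); congruence. Qed.

Lemma fst_swap {T U} (p q v : T * U) : fst p = fst q -> fst (swap p q v) = fst v.
Proof. unfold swap. repeat (destruct excluded_middle_informative; subst); congruence. Qed.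

Section Transport.
Variables (W : Type) (N : W -> (W -> Prop) -> Prop) (V : nat -> W -> Prop).
Variable sigma : W -> W.
Hypothesis sigma_involutive : forall v, sigma (sigma v) = v.
Variables (A B : form).
Hypothesis sigma_A : forall v, forces W N V (sigma v) A <-> forces W N V v A.
Hypothesis sigma_B : forall v, forces W N V (sigma v) B <-> forces W N V v B.

Lemma compose_sigma_involutive (alpha : W -> Prop) : (fun v => alpha (sigma (sigma v))) = alpha.
Proof. apply functional_extensionality. intros v. now rewrite sigma_involutive. Qed.

Lemma forces_cond_transport_1 u u' :
  (forall alpha, N u alpha <-> N u' (fun v => alpha (sigma v))) ->
  forces W N V u (Cond A B) -> forces W N V u' (Cond A B).
Proof.
  intros HN Hu alpha Halpha [y [Hy HyA]].
  destruct (Hu (fun v => alpha (sigma v))) as (beta & Hbeta & Hsub & [z [Hz HzA]] & Hall).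
  - apply HN. now rewrite compose_sigma_involutive.
  - exists (sigma y). rewrite sigma_involutive, sigma_A. auto.
  - exists (fun v => beta (sigma v)). repeat split.
    + now apply HN.
    + intros w Hw. rewrite <- (sigma_involutive w). now apply Hsub.
    + exists (sigma z). rewrite sigma_involutive, sigma_A. auto.
    + intros w Hw HwA. apply sigma_B, Hall, sigma_A; auto.
Qed.

Lemma forces_cond_transport u u' :
  (forall alpha, N u alpha <-> N u' (fun v => alpha (sigma v))) ->
  forces W N V u (Cond A B) <-> forces W N V u' (Cond A B).
Proof.
  intros HN. split; apply forces_cond_transport_1; auto.
  intros alpha. rewrite HN. now rewrite compose_sigma_involutive.
Qed.
End Transport.

Definition step (t : task) (s : sequent) : sequent :=
  match excluded_middle_informative (exists p, In p (premises t s) /\ ~ derivable p) with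
  | left H => proj1_sig (constructive_indefinite_description _ H)
  | right _ => s
  end.

Lemma step_spec t s : ~ derivable s ->
  ~ derivable (step t s) /\
  (premises t s = [] /\ step t s = s \/ In (step t s) (premises t s)).
Proof.
  intros Hs. unfold step. destruct excluded_middle_informative as [H|H].
  - destruct constructive_indefinite_description as [p [Hp Hnd]]. simpl. auto.
  - split; [exact Hs|]. left. split; [|reflexivity].
    apply NNPP. intros Hne. apply Hs, (premises_sound t s Hne).
    apply Forall_forall. intros q Hq. apply NNPP. intros Hnq. apply H. eauto.
Qed.

Lemma premises_keep t s p g : In p (premises t s) ->
  (In g (fst s) -> t <> DecomposeL g -> In g (fst p)) /\
  (In g (snd s) -> t <> DecomposeR g -> In g (snd p)).
Proof.
  destruct s as [G D], t as [f|f|r]; simpl;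
    [destruct in_dec | destruct in_dec | destruct excluded_middle_informative];
    try contradiction; intros Hp; apply in_map_iff in Hp as [e [<- _]]; simpl;
    split; intros Hg Ht; apply in_or_app; right; auto;
    apply in_remove_one; auto; intros ->; auto.
Qed.

Definition left_inert (g : lform) : Prop := forall G D, left_extensions g G D = [].
Definition right_inert (g : lform) : Prop := forall G D, right_extensions g G D = [].

Lemma premises_inert_left g s : left_inert g -> premises (DecomposeL g) s = [].
Proof. intros Hg. destruct s as [G D]; simpl. destruct in_dec; now rewrite ?Hg. Qed.

Lemma premises_inert_right g s : right_inert g -> premises (DecomposeR g) s = [].
Proof. intros Hg. destruct s as [G D]; simpl. destruct in_dec; now rewrite ?Hg. Qed.

Lemma requires_inert r :
  (forall g, In g (fst (requires r)) -> left_inert g) /\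
  (forall g, In g (snd (requires r)) -> right_inert g).
Proof.
  destruct r; simpl; split; intros g Hg; repeat destruct Hg as [<-|Hg];
    try contradiction; intros G D; reflexivity.
Qed.

Definition eventually (P : nat -> Prop) : Prop := exists m, forall n, m <= n -> P n.

Lemma eventually_forall_in {A} (P : A -> nat -> Prop) l :
  (forall g, In g l -> eventually (P g)) -> eventually (fun n => forall g, In g l -> P g n).
Proof.
  induction l as [|g l IH]; intros H.
  - exists 0. simpl. tauto.
  - destruct (H g (or_introl eq_refl)) as [m1 H1], IH as [m2 H2]; [simpl in H; auto|].
    exists (max m1 m2). intros n Hn g' [<-|Hg']; [apply H1 | apply H2]; auto; lia.
Qed.

Section Branch.
Variable s0 : sequent.
Hypothesis s0_underivable : ~ derivable s0.

Fixpoint branch (n : nat) : sequent :=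
  match n with
  | 0 => s0
  | S n => step (schedule n) (branch n)
  end.

Lemma branch_underivable n : ~ derivable (branch n).
Proof. induction n; simpl; [exact s0_underivable | now apply step_spec]. Qed.

Lemma branch_step n :
  premises (schedule n) (branch n) = [] /\ branch (S n) = branch n \/
  In (branch (S n)) (premises (schedule n) (branch n)).
Proof. apply step_spec, branch_underivable. Qed.

Definition in_left (g : lform) : Prop := exists n, In g (fst (branch n)).
Definition in_right (g : lform) : Prop := exists n, In g (snd (branch n)).

Lemma branch_keep_left n g : In g (fst (branch n)) -> schedule n <> DecomposeL g ->
  In g (fst (branch (S n))).
Proof.
  intros Hg Ht. destruct (branch_step n) as [[_ ->]|Hp]; [exact Hg|].
  exact (proj1 (premises_keep _ _ _ g Hp) Hg Ht).
Qed.

Lemma branch_keep_right n g : In g (snd (branch n)) -> schedule n <> DecomposeR g ->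
  In g (snd (branch (S n))).
Proof.
  intros Hg Ht. destruct (branch_step n) as [[_ ->]|Hp]; [exact Hg|].
  exact (proj2 (premises_keep _ _ _ g Hp) Hg Ht).
Qed.

Lemma in_left_eventually g : left_inert g -> in_left g ->
  eventually (fun n => In g (fst (branch n))).
Proof.
  intros Hg [m Hm]. exists m. intros n Hn. induction Hn as [|n Hn IH]; [exact Hm|].
  destruct (branch_step n) as [[_ ->]|Hp]; [exact IH|].
  apply (proj1 (premises_keep _ _ _ g Hp) IH). intros Ht.
  rewrite Ht, premises_inert_left in Hp; auto.
Qed.

Lemma in_right_eventually g : right_inert g -> in_right g ->
  eventually (fun n => In g (snd (branch n))).
Proof.
  intros Hg [m Hm]. exists m. intros n Hn. induction Hn as [|n Hn IH]; [exact Hm|].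
  destruct (branch_step n) as [[_ ->]|Hp]; [exact IH|].
  apply (proj2 (premises_keep _ _ _ g Hp) IH). intros Ht.
  rewrite Ht, premises_inert_right in Hp; auto.
Qed.

Lemma in_left_decomposed g : in_left g ->
  exists k, In g (fst (branch k)) /\ schedule k = DecomposeL g.
Proof.
  intros [m Hm]. destruct (schedule_fair (DecomposeL g) m) as [n [Hmn Hn]].
  assert (H : forall j, m <= j -> In g (fst (branch j)) \/
            exists k, In g (fst (branch k)) /\ schedule k = DecomposeL g).
  { induction 1 as [|j Hj IH]; [now left|].
    destruct IH as [Hg|]; [|now right].
    destruct (classic (schedule j = DecomposeL g)); [right; eauto | left].
    now apply branch_keep_left. }
  destruct (H n Hmn) as [Hg|]; eauto.
Qed.

Lemma in_right_decomposed g : in_right g ->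
  exists k, In g (snd (branch k)) /\ schedule k = DecomposeR g.
Proof.
  intros [m Hm]. destruct (schedule_fair (DecomposeR g) m) as [n [Hmn Hn]].
  assert (H : forall j, m <= j -> In g (snd (branch j)) \/
            exists k, In g (snd (branch k)) /\ schedule k = DecomposeR g).
  { induction 1 as [|j Hj IH]; [now left|].
    destruct IH as [Hg|]; [|now right].
    destruct (classic (schedule j = DecomposeR g)); [right; eauto | left].
    now apply branch_keep_right. }
  destruct (H n Hmn) as [Hg|]; eauto.
Qed.

Definition realized (e : extension) : Prop :=
  (forall g, In g (fst e) -> in_left g) /\ (forall g, In g (snd e) -> in_right g).

Lemma step_realized n e G D : extend e G D = branch (S n) -> realized e.
Proof.
  intros H. split; intros g Hg; exists (S n); rewrite <- H; simpl; apply in_or_app; auto.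
Qed.

Lemma left_saturated g : in_left g -> (forall G D, left_extensions g G D <> []) ->
  exists G D e, In e (left_extensions g G D) /\ realized e.
Proof.
  intros Hg Hne. destruct (in_left_decomposed g Hg) as [k [Hin Hk]].
  destruct (branch_step k) as [[Hnil _]|Hp]; rewrite Hk in *;
    destruct (branch k) as [G D]; simpl in *; destruct in_dec; try contradiction.
  - apply map_eq_nil in Hnil. contradiction (Hne G D).
  - apply in_map_iff in Hp as [e [He Hin']]. exists G, D, e. eauto using step_realized.
Qed.

Lemma right_saturated g : in_right g -> (forall G D, right_extensions g G D <> []) ->
  exists G D e, In e (right_extensions g G D) /\ realized e.
Proof.
  intros Hg Hne. destruct (in_right_decomposed g Hg) as [k [Hin Hk]].
  destruct (branch_step k) as [[Hnil _]|Hp]; rewrite Hk in *;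
    destruct (branch k) as [G D]; simpl in *; destruct in_dec; try contradiction.
  - apply map_eq_nil in Hnil. contradiction (Hne G D).
  - apply in_map_iff in Hp as [e [He Hin']]. exists G, D, e. eauto using step_realized.
Qed.

Lemma expansion_saturated r :
  (forall g, In g (fst (requires r)) -> in_left g) ->
  (forall g, In g (snd (requires r)) -> in_right g) ->
  exists G D e, In e (expansions r G D) /\ realized e.
Proof.
  intros HL HR. destruct (requires_inert r) as [IL IR].
  destruct (eventually_forall_in (fun g n => In g (fst (branch n))) (fst (requires r)))
    as [m1 H1]; [intros g Hg; apply in_left_eventually; auto|].
  destruct (eventually_forall_in (fun g n => In g (snd (branch n))) (snd (requires r)))
    as [m2 H2]; [intros g Hg; apply in_right_eventually; auto|].
  destruct (schedule_fair (Expand r) (max m1 m2)) as [n [Hn Ht]].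
  specialize (H1 n ltac:(lia)). specialize (H2 n ltac:(lia)).
  destruct (branch_step n) as [[Hnil _]|Hp]; rewrite Ht in *;
    destruct (branch n) as [G D]; simpl in *;
    (destruct excluded_middle_informative as [_|Habs]; [|exfalso; apply Habs; split; auto]).
  - apply map_eq_nil in Hnil. destruct r; discriminate.
  - apply in_map_iff in Hp as [e [He Hin]]. exists G, D, e. eauto using step_realized.
Qed.

Ltac realize H :=
  let G := fresh "G" in let D := fresh "D" in let e := fresh "e" in
  let He := fresh "He" in let HL := fresh "HL" in let HR := fresh "HR" in
  destruct H as (G & D & e & He & HL & HR); simpl in He;
  repeat destruct He as [<-|He]; try contradiction.

Ltac from_realized :=
  match goal with
  | H : forall g, In g _ -> in_left g |- in_left _ => apply H; simpl; tauto
  | H : forall g, In g _ -> in_right g |- in_right _ => apply H; simpl; tauto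
  end.

Ltac required := simpl; intros ?g ?Hg; repeat destruct Hg as [<-|Hg]; (assumption || contradiction).

Ltac decompose_left H := realize (left_saturated _ H ltac:(intros ? ?; discriminate)).
Ltac decompose_right H := realize (right_saturated _ H ltac:(intros ? ?; discriminate)).
Ltac expand r := realize (expansion_saturated r ltac:(required) ltac:(required)).

Lemma sat_Land x A B : in_left (LF x (And A B)) -> in_left (LF x A) /\ in_left (LF x B).
Proof. intros H. decompose_left H. split; from_realized. Qed.

Lemma sat_Lor x A B : in_left (LF x (Or A B)) -> in_left (LF x A) \/ in_left (LF x B).
Proof. intros H. decompose_left H; [left|right]; from_realized. Qed.

Lemma sat_Limp x A B : in_left (LF x (Imp A B)) -> in_right (LF x A) \/ in_left (LF x B).
Proof. intros H. decompose_left H; [left|right]; from_realized. Qed.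

Lemma sat_Lex a A : in_left (LEx a A) -> exists y, in_left (LIn y a) /\ in_left (LF y A).
Proof. intros H. decompose_left H. eexists; split; from_realized. Qed.

Lemma sat_Lbar x a A B : in_left (LCnd x a A B) ->
  exists c, in_left (LN c x) /\ in_left (LSub c a) /\ in_left (LEx c A) /\
    in_left (LAll c (Imp A B)).
Proof. intros H. decompose_left H. eexists; repeat split; from_realized. Qed.

Lemma sat_Rand x A B : in_right (LF x (And A B)) -> in_right (LF x A) \/ in_right (LF x B).
Proof. intros H. decompose_right H; [left|right]; from_realized. Qed.

Lemma sat_Ror x A B : in_right (LF x (Or A B)) -> in_right (LF x A) /\ in_right (LF x B).
Proof. intros H. decompose_right H. split; from_realized. Qed.

Lemma sat_Rimp x A B : in_right (LF x (Imp A B)) -> in_left (LF x A) /\ in_right (LF x B).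
Proof. intros H. decompose_right H. split; from_realized. Qed.

Lemma sat_Rcond x A B : in_right (LF x (Cond A B)) ->
  exists c, in_left (LN c x) /\ in_left (LEx c A) /\ in_right (LCnd x c A B).
Proof. intros H. decompose_right H. eexists; repeat split; from_realized. Qed.

Lemma sat_Rall a A : in_right (LAll a A) -> exists y, in_left (LIn y a) /\ in_right (LF y A).
Proof. intros H. decompose_right H. eexists; split; from_realized. Qed.

Lemma sat_Lall y a A : in_left (LIn y a) -> in_left (LAll a A) -> in_left (LF y A).
Proof. intros H1 H2. expand (ExLall y a A). from_realized. Qed.

Lemma sat_Rex y a A : in_left (LIn y a) -> in_right (LEx a A) -> in_right (LF y A).
Proof. intros H1 H2. expand (ExRex y a A). from_realized. Qed.

Lemma sat_Lcond x a A B : in_left (LN a x) -> in_left (LF x (Cond A B)) ->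
  in_right (LEx a A) \/ in_left (LCnd x a A B).
Proof. intros H1 H2. expand (ExLcond x a A B); [left|right]; from_realized. Qed.

Lemma sat_Rbar x c a A B : in_left (LN c x) -> in_left (LSub c a) -> in_right (LCnd x a A B) ->
  in_right (LEx c A) \/ in_right (LAll c (Imp A B)).
Proof. intros H1 H2 H3. expand (ExRbar x c a A B); [left|right]; from_realized. Qed.

Lemma sat_Ref a : in_left (LSub a a).
Proof. expand (ExRef a). from_realized. Qed.

Lemma sat_Tr a b c : in_left (LSub c b) -> in_left (LSub b a) -> in_left (LSub c a).
Proof. intros H1 H2. expand (ExTr a b c). from_realized. Qed.

Lemma sat_Lsub y a b : in_left (LIn y a) -> in_left (LSub a b) -> in_left (LIn y b).
Proof. intros H1 H2. expand (ExLsub y a b). from_realized. Qed.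

Lemma sat_T x : exists a, in_left (LN a x).
Proof. expand (ExT x). eexists; from_realized. Qed.

Lemma sat_W x a : in_left (LN a x) -> in_left (LIn x a).
Proof. intros H. expand (ExW x a). from_realized. Qed.

Lemma sat_C x a : in_left (LN a x) -> in_left (LN (NSing x) x) /\ in_left (LSub (NSing x) a).
Proof. intros H. expand (ExC x a). split; from_realized. Qed.

Lemma sat_Repl_atom y x p : in_left (LIn y (NSing x)) ->
  (in_left (LF x (Atom p)) <-> in_left (LF y (Atom p))).
Proof.
  intros H. split; intros H'; [expand (ExRepl1Atom y x p) | expand (ExRepl2Atom y x p)];
    from_realized.
Qed.

Lemma sat_Repl_N y x a : in_left (LIn y (NSing x)) -> (in_left (LN a x) <-> in_left (LN a y)).
Proof.
  intros H. split; intros H'; [expand (ExRepl1N y x a) | expand (ExRepl2N y x a)];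
    from_realized.
Qed.

Lemma branch_no_init x p : in_left (LF x (Atom p)) -> in_right (LF x (Atom p)) -> False.
Proof.
  intros H1 H2.
  destruct (in_left_eventually (LF x (Atom p)) (fun _ _ => eq_refl) H1) as [m1 E1].
  destruct (in_right_eventually (LF x (Atom p)) (fun _ _ => eq_refl) H2) as [m2 E2].
  set (n := max m1 m2). apply (branch_underivable n). unfold derivable.
  destruct (In_Permutation_cons _ _ (E1 n (Nat.le_max_l _ _))) as [G ->].
  destruct (In_Permutation_cons _ _ (E2 n (Nat.le_max_r _ _))) as [D ->].
  apply d_init.
Qed.

Lemma branch_no_bot x : in_left (LF x Bot) -> False.
Proof.
  intros [n Hn]. apply (branch_underivable n). unfold derivable.
  destruct (In_Permutation_cons _ _ Hn) as [G ->]. apply d_bot.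
Qed.

Definition same_label (u v : nat) : Prop := in_left (LIn u (NSing v)).
Definition label_equiv : nat -> nat -> Prop := clos_refl_sym_trans nat same_label.
Definition label_class (y : nat) : nat -> Prop := fun u => label_equiv u y.

Lemma label_class_eq x y : label_equiv x y -> label_class x = label_class y.
Proof.
  intros H. extensionality u. apply propositional_extensionality. unfold label_class.
  split; intros Hu; eapply rst_trans; eauto using rst_sym.
Qed.

Lemma label_equiv_of_class x y : label_class x = label_class y -> label_equiv x y.
Proof. intros H. change (label_class y x). rewrite <- H. apply rst_refl. Qed.

Lemma label_equiv_atom p u v : label_equiv u v ->
  (in_left (LF u (Atom p)) <-> in_left (LF v (Atom p))).
Proof. induction 1; try tauto. symmetry. now apply sat_Repl_atom. Qed.

Lemma label_equiv_N a u v : label_equiv u v -> (in_left (LN a u) <-> in_left (LN a v)).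
Proof. induction 1; try tauto. symmetry. now apply sat_Repl_N. Qed.

Definition world : Type := ((nat -> Prop) * option nlabel)%type.
Definition world_of (y : nat) : world := (label_class y, None).

Definition denot (a : nlabel) (v : world) : Prop :=
  match snd v with
  | None => exists y, in_left (LIn y a) /\ fst v = label_class y
  | Some c => in_left (LSub c a) /\ exists y, in_left (LIn y c) /\ fst v = label_class y
  end.

(* The second disjunct provides the singleton [{w}] required by centering. *)
Definition base_nbhd (w : nat -> Prop) (alpha : world -> Prop) : Prop :=
  (exists a y, w = label_class y /\ in_left (LN a y) /\ forall v, alpha v <-> denot a v) \/
  (forall v, alpha v <-> v = (w, None)).

(* A tagged world [u] gets the neighbourhoods of its untagged copy, transported by the
   transposition of the two: [u] is then centred and bisimilar to its untagged copy. *)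
Definition nbhd (u : world) (alpha : world -> Prop) : Prop :=
  base_nbhd (fst u) (fun v => alpha (swap (fst u, None) u v)).

Definition valuation (p : nat) (u : world) : Prop :=
  exists y, fst u = label_class y /\ in_left (LF y (Atom p)).

Local Notation forces_b := (forces world nbhd valuation).

Lemma nbhd_untagged w alpha : nbhd (w, None) alpha <-> base_nbhd w alpha.
Proof.
  assert (E : (fun v : world => alpha (swap (w, None) (w, None) v)) = alpha).
  { extensionality v. now rewrite swap_same. }
  unfold nbhd; cbn [fst]. now rewrite E.
Qed.

Lemma forces_untag u A : forces_b u A <-> forces_b (fst u, None) A.
Proof.
  revert u; induction A as [p| |A IHA B IHB|A IHA B IHB|A IHA B IHB|A IHA B IHB]; intros u.
  - reflexivity.
  - reflexivity.
  - simpl. now rewrite IHA, IHB.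
  - simpl. now rewrite IHA, IHB.
  - simpl. now rewrite IHA, IHB.
  - apply (forces_cond_transport _ _ _ (swap (fst u, None) u)); [apply swap_involutive| | |].
    + intros v. rewrite IHA, (IHA v), fst_swap; reflexivity.
    + intros v. rewrite IHB, (IHB v), fst_swap; reflexivity.
    + intros alpha. now rewrite nbhd_untagged.
Qed.

Lemma nbhd_world_of x alpha : nbhd (world_of x) alpha <-> base_nbhd (label_class x) alpha.
Proof. apply nbhd_untagged. Qed.

Lemma base_nbhd_contains w alpha : base_nbhd w alpha -> alpha (w, None).
Proof.
  intros [(a & y & -> & Hy & Ha)|H]; [apply Ha | now apply H].
  exists y. split; [now apply sat_W | reflexivity].
Qed.

Lemma model_nbhd_nonempty : nbhd_nonempty world nbhd.
Proof. intros u alpha H. apply base_nbhd_contains in H. eauto. Qed.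

Lemma model_centering : centering world nbhd.
Proof.
  split.
  - intros u alpha H. apply base_nbhd_contains in H. now rewrite swap_l in H.
  - intros u. right. intros v. split.
    + intros H. rewrite <- (swap_involutive (fst u, None) u v), H. apply swap_r.
    + intros ->. apply swap_l.
Qed.

Lemma denot_label a v : denot a v -> exists y, in_left (LIn y a) /\ fst v = label_class y.
Proof.
  unfold denot. destruct (snd v) as [c|]; [|auto].
  intros [Hca (y & Hy & Hv)]. eauto using sat_Lsub.
Qed.

Lemma denot_mono c a v : in_left (LSub c a) -> denot c v -> denot a v.
Proof.
  intros Hca. unfold denot. destruct (snd v) as [c'|].
  - intros [Hc'c Hy]. eauto using sat_Tr.
  - intros (y & Hy & Hv). eauto using sat_Lsub.
Qed.

Lemma denot_world_of a y : in_left (LIn y a) -> denot a (world_of y).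
Proof. intros H. exists y. auto. Qed.

Lemma denot_nbhd a x : in_left (LN a x) -> nbhd (world_of x) (denot a).
Proof. intros H. apply nbhd_world_of. left. exists a, x. repeat split; auto; tauto. Qed.

Lemma forces_class v y A : fst v = label_class y -> (forces_b v A <-> forces_b (world_of y) A).
Proof. intros H. rewrite forces_untag, H. reflexivity. Qed.

Lemma world_of_same_label y x : in_left (LIn y (NSing x)) -> world_of y = world_of x.
Proof. intros H. unfold world_of. now rewrite (label_class_eq y x (rst_step _ _ _ _ H)). Qed.

Definition truthful (A : form) : Prop :=
  (forall x, in_left (LF x A) -> forces_b (world_of x) A) /\
  (forall x, in_right (LF x A) -> ~ forces_b (world_of x) A).

Section Truthful.
Variables (A B : form).
Hypotheses (TA : truthful A) (TB : truthful B).

Lemma ex_left a : in_left (LEx a A) -> exists v, denot a v /\ forces_b v A.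
Proof.
  intros H. destruct (sat_Lex a A H) as [y [Hy HyA]].
  exists (world_of y). split; [now apply denot_world_of | now apply TA].
Qed.

Lemma ex_right a : in_right (LEx a A) -> forall v, denot a v -> ~ forces_b v A.
Proof.
  intros H v Hv. destruct (denot_label a v Hv) as [y [Hy Hvy]].
  rewrite (forces_class v y A Hvy). apply TA. eapply sat_Rex; eauto.
Qed.

Lemma all_imp_left c : in_left (LAll c (Imp A B)) ->
  forall v, denot c v -> forces_b v A -> forces_b v B.
Proof.
  intros H v Hv. destruct (denot_label c v Hv) as [y [Hy Hvy]].
  rewrite !(forces_class v y _ Hvy). intros HA.
  destruct (sat_Limp y A B (sat_Lall y c _ Hy H)) as [HR|HL].
  - exfalso. exact (proj2 TA y HR HA).
  - now apply TB.
Qed.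

Lemma all_imp_right c : in_right (LAll c (Imp A B)) ->
  exists v, denot c v /\ forces_b v A /\ ~ forces_b v B.
Proof.
  intros H. destruct (sat_Rall c _ H) as [y [Hy HyAB]].
  destruct (sat_Rimp y A B HyAB) as [HyA HyB].
  exists (world_of y). repeat split; [now apply denot_world_of | now apply TA | now apply TB].
Qed.

Lemma cond_left_at_self x : in_left (LF x (Cond A B)) ->
  forces_b (world_of x) A -> forces_b (world_of x) B.
Proof.
  intros Hx HA. destruct (sat_T x) as [a Ha]. destruct (sat_C x a Ha) as [Hs _].
  destruct (sat_Lcond x _ A B Hs Hx) as [HR|HC].
  - exfalso. exact (ex_right _ HR _ (denot_world_of _ _ (sat_W _ _ Hs)) HA).
  - destruct (sat_Lbar _ _ _ _ HC) as (c & _ & Hcx & HcA & HcAB).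
    destruct (ex_left c HcA) as [w [Hw HwA]].
    destruct (denot_label _ w (denot_mono _ _ w Hcx Hw)) as [y [Hy Hwy]].
    rewrite <- (world_of_same_label y x Hy), <- (forces_class w y B Hwy).
    exact (all_imp_left c HcAB w Hw HwA).
Qed.

Lemma truthful_cond_left x : in_left (LF x (Cond A B)) -> forces_b (world_of x) (Cond A B).
Proof.
  intros Hx alpha Halpha [v [Hv HvA]].
  apply (proj1 (nbhd_world_of x alpha)) in Halpha as [(a & y & Hxy & Hay & Halpha)|Halpha].
  - apply (label_equiv_N a x y (label_equiv_of_class x y Hxy)) in Hay.
    apply Halpha in Hv.
    destruct (sat_Lcond x a A B Hay Hx) as [HR|HC]; [exfalso; exact (ex_right a HR v Hv HvA)|].
    destruct (sat_Lbar _ _ _ _ HC) as (c & Hc & Hca & HcA & HcAB).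
    exists (denot c). repeat split.
    + now apply denot_nbhd.
    + intros z Hz. apply Halpha. eapply denot_mono; eauto.
    + now apply ex_left.
    + now apply all_imp_left.
  - apply Halpha in Hv. subst v.
    exists (fun v => v = world_of x). repeat split.
    + apply nbhd_world_of. right. reflexivity.
    + intros z ->. now apply Halpha.
    + now exists (world_of x).
    + intros z -> _. now apply cond_left_at_self.
Qed.

Lemma cond_right_at_self x a : in_left (LN a x) -> in_right (LCnd x a A B) ->
  forces_b (world_of x) A -> ~ forces_b (world_of x) B.
Proof.
  intros Ha Hcnd HA HB. destruct (sat_C x a Ha) as [Hs Hsa].
  destruct (sat_Rbar x _ a A B Hs Hsa Hcnd) as [HR|HR].
  - exact (ex_right _ HR _ (denot_world_of _ _ (sat_W _ _ Hs)) HA).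
  - destruct (all_imp_right _ HR) as (v & Hv & HvA & HvB).
    destruct (denot_label _ v Hv) as [y [Hy Hvy]].
    apply HvB. rewrite (forces_class v y B Hvy), (world_of_same_label y x Hy). exact HB.
Qed.

Lemma truthful_cond_right x : in_right (LF x (Cond A B)) -> ~ forces_b (world_of x) (Cond A B).
Proof.
  intros Hx H. destruct (sat_Rcond _ _ _ Hx) as (a & Ha & HaA & Hcnd).
  destruct (H (denot a)) as (beta & Hbeta & Hsub & [w [Hw HwA]] & Hall);
    [now apply denot_nbhd | now apply ex_left |].
  apply (proj1 (nbhd_world_of x beta)) in Hbeta as [(c & y & Hxy & Hcy & Hbeta)|Hbeta].
  - apply (label_equiv_N c x y (label_equiv_of_class x y Hxy)) in Hcy.
    (* The copy of [x] tagged with [c] is in [beta ⊆ denot a], which records [c ⊆ a]. *)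
    assert (Hca : in_left (LSub c a)).
    { assert (Htag : denot c (label_class x, Some c)).
      { split; [apply sat_Ref | exists x; split; [now apply sat_W | reflexivity]]. }
      apply Hbeta, Hsub in Htag. exact (proj1 Htag). }
    destruct (sat_Rbar x c a A B Hcy Hca Hcnd) as [HR|HR].
    + exact (ex_right c HR w (proj1 (Hbeta w) Hw) HwA).
    + destruct (all_imp_right c HR) as (v & Hv & HvA & HvB).
      apply HvB, Hall; [now apply Hbeta | exact HvA].
  - apply Hbeta in Hw. subst w.
    exact (cond_right_at_self x a Ha Hcnd HwA (Hall _ (proj2 (Hbeta _) eq_refl) HwA)).
Qed.
End Truthful.

Lemma truth_lemma A : truthful A.
Proof.
  induction A as [p| |A IHA B IHB|A IHA B IHB|A IHA B IHB|A IHA B IHB];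
    split; intros x Hx; simpl.
  - now exists x.
  - intros [y [Hxy Hy]]. apply (branch_no_init x p); auto.
    now apply (label_equiv_atom p x y (label_equiv_of_class x y Hxy)).
  - exact (branch_no_bot x Hx).
  - tauto.
  - destruct (sat_Land x A B Hx). split; [apply IHA | apply IHB]; auto.
  - intros [HA HB]. destruct (sat_Rand x A B Hx); [eapply IHA | eapply IHB]; eauto.
  - destruct (sat_Lor x A B Hx); [left; apply IHA | right; apply IHB]; auto.
  - destruct (sat_Ror x A B Hx). intros [HA|HB]; [eapply IHA | eapply IHB]; eauto.
  - intros HA. destruct (sat_Limp x A B Hx) as [HR|HL]; [exfalso; eapply IHA | apply IHB]; eauto.
  - destruct (sat_Rimp x A B Hx) as [HL HR]. intros H. apply (proj2 IHB x HR), H, IHA, HL.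
  - now apply truthful_cond_left.
  - now apply truthful_cond_right.
Qed.
End Branch.

Theorem mainTheorem19 (A : form) :
  valid_PC A -> forall x : nat, deriv [] [LF x A].
Proof.
  intros HV x. apply NNPP. intros Hnd.
  set (s0 := ([], [LF x A]) : sequent).
  apply (proj2 (truth_lemma s0 Hnd A) x).
  - exists 0. simpl. auto.
  - apply HV.
    + exact (inhabits (world_of s0 x)).
    + exact (model_nbhd_nonempty s0 Hnd).
    + exact (model_centering s0 Hnd).
Qed.
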